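(* For any finite multiset of items $I$, any item $i\in I$, and any finite sequence of bins $\sigma$, if $p$ is a valid packing of $I$ into $\sigma$, then there is a valid packing of $I\setminus\{i\}$ into $\sigma$ that uses a subset of the bins used by $p$.
   Context: Grid Scheduling setting: items have positive integer sizes; bins have positive integer sizes and form a sequence $\sigma=\langle b_1,\dots,b_m\rangle$. A partial packing assigns some items to bins such that the total size of the items in each bin is at most the bin's size; a packing assigns every item. A bin is used if it receives at least one item. A (partial) packing is valid if each empty bin is smaller than every unpacked item and smaller than every item packed in a bin occurring later in the sequence. *)

From mathcomp Require Import all_boot.
Set Implicit Arguments. Unset Strict Implicit. Unset Printing Implicit Defensive.

(* Items: a multiset of item sizes, represented as a seq nat (order irrelevant).
   Bins: the sequence sigma = <b_1,...,b_m> of bin sizes, a seq nat; bin j is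
   the j-th entry (0-based), so "later in the sequence" = larger index.
   A partial packing p assigns to the k-th item either None (unpacked) or
   Some j (packed into bin j). *)

Definition load (I : seq nat) (p : seq (option nat)) (j : nat) : nat :=
  \sum_(k < size I | nth None p k == Some j) nth 0 I k.

Definition is_partial_packing (I s : seq nat) (p : seq (option nat)) : Prop :=
  [/\ size p = size I,
      (forall k j, k < size I -> nth None p k = Some j -> j < size s) &
      (forall j, j < size s -> load I p j <= nth 0 s j)].

Definition is_packing (I s : seq nat) (p : seq (option nat)) : Prop :=
  is_partial_packing I s p /\ (forall k, k < size I -> nth None p k <> None).

Definition used (p : seq (option nat)) (j : nat) : bool := Some j \in p.

Definition is_valid (I s : seq nat) (p : seq (option nat)) : Prop :=
  is_partial_packing I s p /\
  forall j, j < size s -> ~~ used p j ->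
    (forall k, k < size I -> nth None p k = None -> nth 0 s j < nth 0 I k) /\
    (forall k j', k < size I -> nth None p k = Some j' -> j < j' ->
        nth 0 s j < nth 0 I k).

Definition is_valid_packing (I s : seq nat) (p : seq (option nat)) : Prop :=
  is_packing I s p /\ is_valid I s p.

(* Deleting item i from p yields a packing of the remaining items that uses
   only bins used by p, but it may be invalid: a bin emptied by the deletion
   may now accommodate an item from a later bin.  Moving such an item down into
   that empty bin strictly decreases the sum of the bin indices, so repeating
   this ends in a valid packing.  Every move targets a bin used by p: by
   validity of p, an item is larger than every bin left empty by p before the
   bin it occupies in p, and items only ever move down. *)

From mathcomp Require Import all_boot zify.
Set Implicit Arguments. Unset Strict Implicit. Unset Printing Implicit Defensive.

Definition rem_at T (r : nat) (s : seq T) := take r s ++ drop r.+1 s.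

Section RemAt.

Variables (T : Type) (r : nat) (s : seq T).
Hypothesis lt_r_s : r < size s.

Lemma size_rem_at : size (rem_at r s) = (size s).-1.
Proof. by rewrite size_cat size_take size_drop lt_r_s; lia. Qed.

Lemma nth_rem_at x0 k : nth x0 (rem_at r s) k = nth x0 s (bump r k).
Proof.
rewrite nth_cat size_take lt_r_s /bump; case: ltnP => [lt_k_r | le_r_k].
  by rewrite nth_take // leqNgt lt_k_r.
by rewrite nth_drop; congr nth; lia.
Qed.

Lemma bump_lt_size k : k < (size s).-1 -> bump r k < size s.
Proof. by rewrite /bump; case: (leqP r k) => /= _; lia. Qed.

End RemAt.

Lemma mem_rem_at (T : eqType) r (s : seq T) x : x \in rem_at r s -> x \in s.
Proof. by rewrite mem_cat => /orP[/mem_take | /mem_drop]. Qed.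

Lemma big_ord_set_nth T (x0 y : T) (q : seq T) n k (F : nat -> T -> nat) :
  k < n ->
  \sum_(i < n) F i (nth x0 (set_nth x0 q k y) i) + F k (nth x0 q k)
  = \sum_(i < n) F i (nth x0 q i) + F k y.
Proof.
move=> lt_k_n; rewrite (bigD1 (Ordinal lt_k_n)) //= [in RHS](bigD1 (Ordinal lt_k_n)) //=.
rewrite nth_set_nth /= eqxx (eq_bigr (fun i : 'I_n => F i (nth x0 q i))) => [|i ne_i_k]; first lia.
by move: ne_i_k; rewrite nth_set_nth -val_eqE /= => /negbTE->.
Qed.

Lemma loadE I q a :
  load I q a = \sum_(k < size I) (if nth None q k == Some a then nth 0 I k else 0).
Proof. exact: big_mkcond. Qed.

Lemma load_unused I q a : ~~ used q a -> load I q a = 0.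
Proof.
move=> unused_a; apply: big1 => k /eqP qk; move: unused_a; rewrite /used -qk.
by case: (ltnP k (size q)) => [/(mem_nth None)-> | /(nth_default None)] //; rewrite qk.
Qed.

Lemma load_set_nth I q k v a : k < size I ->
  load I (set_nth None q k v) a + (if nth None q k == Some a then nth 0 I k else 0)
  = load I q a + (if v == Some a then nth 0 I k else 0).
Proof.
by move=> lt_k_I; rewrite !loadE (big_ord_set_nth _ _ _
  (fun i x => if x == Some a then nth 0 I i else 0)).
Qed.

Lemma load_rem_at I p r a : r < size I -> size p = size I ->
  load (rem_at r I) (rem_at r p) a <= load I p a.
Proof.
move=> lt_r_I size_p; rewrite !loadE size_rem_at //.
under eq_bigr => k _ do rewrite !nth_rem_at ?size_p //.
case: (size I) lt_r_I => // n lt_r_n.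
by rewrite (bigD1_ord (Ordinal lt_r_n)) //= leq_addl.
Qed.

Lemma packing_rem_at I s p r : r < size I -> is_packing I s p ->
  is_packing (rem_at r I) s (rem_at r p).
Proof.
move=> lt_r_I [[size_p bin_p load_p] full_p].
have lt_r_p : r < size p by rewrite size_p.
have lt_bump k : k < size (rem_at r I) -> bump r k < size I.
  by rewrite size_rem_at //; exact: bump_lt_size.
split; first split.
- by rewrite !size_rem_at // size_p.
- by move=> k j /lt_bump lt_k; rewrite nth_rem_at //; exact: bin_p.
- by move=> j lt_j; apply: leq_trans (load_p j lt_j); exact: load_rem_at.
- by move=> k /lt_bump lt_k; rewrite nth_rem_at //; exact: full_p.
Qed.

Definition no_fit_below (U : pred nat) (I s : seq nat) (q : seq (option nat)) :=
  forall k a j, k < size I -> nth None q k = Some a -> j < a -> ~~ U j ->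
    nth 0 s j < nth 0 I k.

Lemma valid_no_fit_below I s p : is_valid_packing I s p -> no_fit_below (used p) I s p.
Proof.
move=> [[[_ bin_p _] _] [_ valid_p]] k a j lt_k pk lt_j_a unused_j.
have lt_j_s : j < size s := ltn_trans lt_j_a (bin_p _ _ lt_k pk).
exact: (valid_p j lt_j_s unused_j).2 k a lt_k pk lt_j_a.
Qed.

Lemma no_fit_below_rem_at U I s p r : r < size I -> size p = size I ->
  no_fit_below U I s p -> no_fit_below U (rem_at r I) s (rem_at r p).
Proof.
move=> lt_r_I size_p fit_p k a j; rewrite size_rem_at // => lt_k.
rewrite !nth_rem_at ?size_p //; exact/fit_p/bump_lt_size.
Qed.

Lemma used_set_nth q k v a : used (set_nth None q k v) a -> v = Some a \/ used q a.
Proof.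
rewrite /used -!has_pred1 !has_count count_set_nthF //=.
case: eqP => [-> | _]; [by left | right; lia].
Qed.

Section Repair.

Variables (J s : seq nat) (U : pred nat).

(* An unpacked item reads as bin 0, so it never lies after bin [j]. *)
Definition movable q j k :=
  [&& ~~ used q j, j < odflt 0 (nth None q k) & nth 0 J k <= nth 0 s j].

Definition bin_sum q := \sum_(k < size J) odflt 0 (nth None q k).

Lemma valid_unmovable q : is_packing J s q ->
  (forall j k, j < size s -> k < size J -> ~~ movable q j k) -> is_valid J s q.
Proof.
move=> [part_q full_q] unmovable; split=> // j lt_j unused_j.
split=> [k lt_k /(full_q k lt_k) // | k j' lt_k qk lt_j_j'].
rewrite ltnNge.
by have := unmovable j k lt_j lt_k; rewrite /movable unused_j qk lt_j_j'.
Qed.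

Lemma packing_move_down q j k : is_packing J s q -> j < size s -> ~~ used q j ->
  k < size J -> nth 0 J k <= nth 0 s j -> is_packing J s (set_nth None q k (Some j)).
Proof.
move=> [[size_q bin_q load_q] full_q] lt_j unused_j lt_k fits.
have nth_q' k' : nth None (set_nth None q k (Some j)) k' =
    if k' == k then Some j else nth None q k' by exact: nth_set_nth.
split; first split.
- by rewrite size_set_nth size_q; apply/maxn_idPr.
- by move=> k' a lt_k'; rewrite nth_q'; case: ifP => _; [by case=> <- | exact: bin_q].
- move=> a lt_a; have := load_set_nth q (Some j) a lt_k.
  have qk_ne_j : nth None q k != Some j.
    by apply: contra unused_j => /eqP qk; rewrite /used -qk mem_nth // size_q.
  case: (eqVneq a j) => [-> | ne_a_j].
    by rewrite [load J q j]load_unused // eqxx (negbTE qk_ne_j); lia.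
  have -> : (Some j == Some a) = false by apply/eqP => -[/esym/eqP]; apply/negP.
  by have := load_q a lt_a; lia.
- by move=> k' lt_k'; rewrite nth_q'; case: ifP => // _; exact: full_q.
Qed.

Lemma no_fit_below_move_down q k j j' : nth None q k = Some j' -> j <= j' ->
  no_fit_below U J s q -> no_fit_below U J s (set_nth None q k (Some j)).
Proof.
move=> qk le_j_j' fit_q k' a j2 lt_k'; rewrite nth_set_nth /=.
case: eqP => [eq_k'_k | _]; last exact: fit_q.
subst k'; case=> <- lt_j2_j; exact: fit_q lt_k' qk (leq_trans lt_j2_j le_j_j').
Qed.

Lemma bin_sum_move_down q k j j' : k < size J -> nth None q k = Some j' -> j < j' ->
  bin_sum (set_nth None q k (Some j)) < bin_sum q.
Proof.
move=> lt_k qk lt_j_j'.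
have := big_ord_set_nth None (Some j) q (fun _ x => odflt 0 x) lt_k.
by rewrite qk /= /bin_sum -(ltn_add2r j') => ->; rewrite ltn_add2l.
Qed.

Lemma repair_packing q : is_packing J s q -> (forall a, used q a -> U a) ->
  no_fit_below U J s q ->
  exists q', is_valid_packing J s q' /\ (forall a, used q' a -> U a).
Proof.
have [n] := ubnP (bin_sum q); elim: n => // n IH in q * => lt_q_n pack_q used_q fit_q.
case: (boolP [exists j : 'I_(size s), exists k : 'I_(size J), movable q j k]).
  case/existsP=> -[j lt_j] /existsP[[k lt_k]] /and3P[unused_j lt_j_qk fits].
  case qk: (nth None q k) lt_j_qk => [j'|//] /= lt_j_j'.
  have U_j : U j.
    apply/negPn/negP => notU_j.
    by have := fit_q _ _ _ lt_k qk lt_j_j' notU_j; rewrite ltnNge fits.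
  apply: (IH (set_nth None q k (Some j))).
  - exact: leq_trans (bin_sum_move_down lt_k qk lt_j_j') lt_q_n.
  - exact: packing_move_down.
  - by move=> a /used_set_nth[[<-] | /used_q].
  - exact: no_fit_below_move_down qk (ltnW lt_j_j') fit_q.
move/existsPn=> unmovable; exists q; split=> //; split=> //.
apply: valid_unmovable => // j k lt_j lt_k.
exact: (existsPn (unmovable (Ordinal lt_j))) (Ordinal lt_k).
Qed.

End Repair.

Lemma valid_packing_rem_at I s p r : r < size I -> is_valid_packing I s p ->
  exists q, is_valid_packing (rem_at r I) s q /\ (forall j, used q j -> used p j).
Proof.
move=> lt_r_I valid_p; have [pack_p _] := valid_p.
have [[size_p _ _] _] := pack_p.
apply: (@repair_packing _ _ _ (rem_at r p)).
- exact: packing_rem_at.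
- by move=> a /mem_rem_at.
- exact/no_fit_below_rem_at/valid_no_fit_below.
Qed.

Theorem lemma1 (I : seq nat) (i : nat) (s : seq nat) (p : seq (option nat)) :
  all (fun x => 0 < x) I -> all (fun b => 0 < b) s ->
  i \in I ->
  is_valid_packing I s p ->
  exists q : seq (option nat),
    is_valid_packing (rem i I) s q /\ (forall j, used q j -> used p j).
Proof.
move=> _ _ mem_i; rewrite remE; apply: valid_packing_rem_at.
by rewrite index_mem.
Qed.
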